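(* Assume: every admissible noise $e=y_\delta-y$ (with $\|e\|\le\delta$) satisfies MC$_2$ with a common constant $C_2$; $x^\dagger\neq0$ satisfies $x^\dagger=(A^*A)^\mu\omega$, $\|\omega\|\le C_s$, with $0<\mu\le1$. Let $\alpha^*$ be a minimizer over $(0,\alpha_{\max})$ of the simple-L ratio functional $\psi_{SLR}$, and put $\tilde\mu=\min\{\mu,\tfrac12\}$. Then there exist $C>0$ and $\delta_0>0$, independent of $\delta$ and $e$, such that for all $0<\delta\le\delta_0$ $$\|x_{\alpha^*}^\delta-x^\dagger\|\le C\,\delta^{\frac{2\tilde\mu}{2\tilde\mu+1}\,2\tilde\mu};$$ and if in addition there is $D>0$ with $\sum_{\lambda_i\le\alpha}|\langle x^\dagger,u_i\rangle|^2\le D\sum_{\lambda_i\ge\alpha}\frac{\alpha}{\lambda_i}|\langle x^\dagger,u_i\rangle|^2$ for all $\alpha\in(0,\alpha_{\max})$, then for all $0<\delta\le\delta_0$ $$\|x_{\alpha^*}^\delta-x^\dagger\|\le C\,\delta^{\frac{2\tilde\mu}{2\tilde\mu+1}}.$$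
   Context: Let $X,Y$ be real Hilbert spaces and $A:X\to Y$ a compact linear operator with singular system $(\sigma_i,u_i,v_i)_i$, $\sigma_i>0$; put $\lambda_i=\sigma_i^2$. Let $x^\dagger\in N(A)^\perp$ be the minimum-norm solution, $y=Ax^\dagger$, $y_\delta=y+e$ with $\|e\|\le\delta$. Tikhonov regularization: $x_\alpha^\delta=(A^*A+\alpha I)^{-1}A^*y_\delta$, $\alpha\in(0,\alpha_{\max})$. Simple-L functional $\psi_{SL}(\alpha):=\big(\sum_i\frac{\alpha\lambda_i}{(\lambda_i+\alpha)^3}|\langle y_\delta,v_i\rangle|^2\big)^{1/2}=\big(-\tfrac12\alpha\tfrac{d}{d\alpha}\|x_\alpha^\delta\|^2\big)^{1/2}$; simple-L ratio functional $\psi_{SLR}(\alpha):=\psi_{SL}(\alpha)/\|x_\alpha^\delta\|$. Condition MC$_2$ with constant $C_2$: for all $0<\alpha\le\alpha_{\max}$, $\sum_{\lambda_i\ge\alpha}\frac{\alpha}{\lambda_i}|\langle e,v_i\rangle|^2\le C_2\sum_{\lambda_i\le\alpha}\frac{\lambda_i}{\alpha}|\langle e,v_i\rangle|^2$. *)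

(* classical reals.  The Hilbert-space setting is encoded in
   coordinates w.r.t. the singular system. *)
From Stdlib Require Import Reals Lra ClassicalEpsilon.
Open Scope R_scope.

Definition ex_series (f : nat -> R) : Prop := exists l, infinite_sum f l.

(* The sum of a series (meaningful only when it converges; all series used
   in the statement are provably convergent under its hypotheses). *)
Definition ssum (f : nat -> R) : R :=
  epsilon (inhabits 0) (fun l => infinite_sum f l).

Definition indic (b : bool) (x : R) : R := if b then x else 0.
Definition leRb (a b : R) : bool := if Rle_dec a b then true else false.

Definition pw (l mu : R) : R := if Rlt_dec 0 l then Rpower l mu else 0.

(* Data in coordinates: lam i = sigma_i^2, xd i = <x^dagger,u_i>,
   e i = <e, v_i>.  Then <y_delta, v_i> = sigma_i * xd i + e i. *)
Definition ydc (lam xd e : nat -> R) (i : nat) : R :=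
  sqrt (lam i) * xd i + e i.

(* coordinates <x_alpha^delta, u_i> of the Tikhonov solution *)
Definition xtik (lam xd e : nat -> R) (alpha : R) (i : nat) : R :=
  sqrt (lam i) / (lam i + alpha) * ydc lam xd e i.

Definition norm_seq (f : nat -> R) : R := sqrt (ssum (fun i => f i ^ 2)).

Definition psi_SL (lam xd e : nat -> R) (alpha : R) : R :=
  sqrt (ssum (fun i => alpha * lam i / (lam i + alpha) ^ 3 * ydc lam xd e i ^ 2)).

Definition psi_SLR (lam xd e : nat -> R) (alpha : R) : R :=
  psi_SL lam xd e alpha / norm_seq (xtik lam xd e alpha).

Definition MC2 (lam e : nat -> R) (alpha_max C2 : R) : Prop :=
  forall alpha, 0 < alpha <= alpha_max ->
    ssum (fun i => indic (leRb alpha (lam i)) (alpha / lam i * e i ^ 2))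
    <= C2 * ssum (fun i => indic (leRb (lam i) alpha) (lam i / alpha * e i ^ 2)).

Definition err (lam xd e : nat -> R) (alpha : R) : R :=
  norm_seq (fun i => xtik lam xd e alpha i - xd i).

(* Work in the coordinates of the singular system and let [mu' = min mu (1/2)].
   Take the reference parameter [alpha_d = delta ^ q], [q = 2 / (2 mu' + 1)], and
   [eps = delta ^ p = alpha_d ^ (2 mu')].
   At [alpha_d] the source condition and [||e|| <= delta] give [psi_SL(alpha_d)^2 = O(eps)], while
   [||x_(alpha_d)^delta||] is bounded below by one nonzero coordinate of [x^dagger]; minimality of
   [alpha*] for the ratio then gives [psi_SL(alpha* )^2 = O(eps) ||x_(alpha* )^delta||^2].  As
   [psi_SL(alpha)^2 >= alpha / (lambda_max + alpha) ||x_alpha^delta||^2], this forces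
   [alpha* = O(eps)].  The propagated noise at [alpha*] is [O(eps)]: it is at most
   [delta^2 / alpha*] when [alpha* >= alpha_d], and otherwise MC_2 bounds it by the noise part of
   [psi_SL(alpha* )^2], which is controlled by [psi_SL(alpha* )^2] and by its exact-data part
   [O(alpha* ^ (2 mu'))].  The approximation error is [O(alpha* ^ (2 mu')) = O(eps ^ (2 mu'))],
   whence the first rate.  Under the additional condition it is bounded by the high-frequency
   sum [sum_(lambda_i >= alpha) alpha / lambda_i |<x^dagger, u_i>|^2], which is at most a multiple
   of the exact-data part of [psi_SL(alpha* )^2], hence [O(eps)]: the second rate. *)

From Coquelicot Require Import Coquelicot.
From Stdlib Require Import Reals Lra Psatz ClassicalEpsilon Classical.
Open Scope R_scope.
Set Bullet Behavior "Strict Subproofs".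

(** * Series with nonnegative terms *)

Lemma ex_series_Series f : ex_series f <-> Series.ex_series f.
Proof. split; intros [l Hl]; exists l; now apply is_series_Reals. Qed.

Lemma ssum_correct f : ex_series f -> infinite_sum f (ssum f).
Proof. exact (epsilon_spec (inhabits 0) (fun l => infinite_sum f l)). Qed.

Lemma ssum_Series f : ex_series f -> ssum f = Series f.
Proof.
  intros Hf. symmetry. apply is_series_unique, is_series_Reals, ssum_correct, Hf.
Qed.

Lemma ex_series_le f g :
  (forall n, 0 <= f n <= g n) -> ex_series g -> ex_series f.
Proof.
  intros Hfg Hg. apply ex_series_Series. apply ex_series_Series in Hg.
  apply (@ex_series_le R_AbsRing R_CompleteNormedModule f g); auto.
  intros n. change (Rabs (f n) <= g n). rewrite Rabs_pos_eq; apply Hfg.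
Qed.

Lemma ssum_le f g : (forall n, 0 <= f n <= g n) -> ex_series g -> ssum f <= ssum g.
Proof.
  intros Hfg Hg. assert (Hf := ex_series_le f g Hfg Hg).
  rewrite !ssum_Series by assumption.
  apply Series_le; [assumption | now apply ex_series_Series].
Qed.

Lemma ex_series_comb c d f g :
  ex_series f -> ex_series g -> ex_series (fun n => c * f n + d * g n).
Proof.
  intros Hf%ex_series_Series Hg%ex_series_Series. apply ex_series_Series.
  apply (@ex_series_plus R_AbsRing R_NormedModule);
    now apply (@ex_series_scal_l R_AbsRing R_NormedModule).
Qed.

Lemma ssum_comb c d f g : ex_series f -> ex_series g ->
  ssum (fun n => c * f n + d * g n) = c * ssum f + d * ssum g.
Proof.
  intros Hf Hg. rewrite !ssum_Series by auto using ex_series_comb.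
  apply ex_series_Series in Hf, Hg.
  rewrite Series_plus, !Series_scal_l;
    try reflexivity; now apply (@ex_series_scal_l R_AbsRing R_NormedModule).
Qed.

Lemma ex_series_le_comb c d f g h : (forall n, 0 <= f n <= c * g n + d * h n) ->
  ex_series g -> ex_series h -> ex_series f.
Proof. intros Hf Hg Hh. exact (ex_series_le _ _ Hf (ex_series_comb c d g h Hg Hh)). Qed.

Lemma ssum_le_comb c d f g h : (forall n, 0 <= f n <= c * g n + d * h n) ->
  ex_series g -> ex_series h -> ssum f <= c * ssum g + d * ssum h.
Proof.
  intros Hf Hg Hh. rewrite <- ssum_comb by assumption.
  exact (ssum_le _ _ Hf (ex_series_comb c d g h Hg Hh)).
Qed.

Lemma ex_series_le_scal c f g : (forall n, 0 <= f n <= c * g n) ->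
  ex_series g -> ex_series f.
Proof.
  intros Hf Hg. apply (ex_series_le_comb c 0 f g g); auto.
  intros n. rewrite Rmult_0_l, Rplus_0_r. apply Hf.
Qed.

Lemma ssum_le_scal c f g : (forall n, 0 <= f n <= c * g n) ->
  ex_series g -> ssum f <= c * ssum g.
Proof.
  intros Hf Hg. rewrite <- (Rplus_0_r (c * ssum g)), <- (Rmult_0_l (ssum g)).
  apply ssum_le_comb; auto. intros n. rewrite Rmult_0_l, Rplus_0_r. apply Hf.
Qed.

Lemma ssum_ge_term f i : (forall n, 0 <= f n) -> ex_series f -> f i <= ssum f.
Proof.
  intros Hf0 Hf. apply Rle_trans with (sum_f_R0 f i).
  - destruct i as [|i]; simpl; [lra|].
    assert (0 <= sum_f_R0 f i) by (apply cond_pos_sum; auto). lra.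
  - apply sum_incr; auto. now apply ssum_correct.
Qed.

Lemma ssum_ge0 f : (forall n, 0 <= f n) -> ex_series f -> 0 <= ssum f.
Proof. intros Hf0 Hf. apply Rle_trans with (f 0%nat); auto using ssum_ge_term. Qed.

(** * Elementary real inequalities *)

Lemma Rpower_gt0 x y : 0 < Rpower x y.
Proof. apply exp_pos. Qed.

Lemma Rpower_sq x y : Rpower x y ^ 2 = Rpower x (2 * y).
Proof. simpl. rewrite Rmult_1_r, <- Rpower_plus. f_equal. ring. Qed.

Lemma Rpower_le_exponent x p q : 0 < x <= 1 -> p <= q -> Rpower x q <= Rpower x p.
Proof.
  intros Hx Hpq. unfold Rpower.
  destruct (Req_dec x 1) as [->|Hx1]; [rewrite ln_1, !Rmult_0_r; lra|].
  destruct (Req_dec p q) as [->|Hpq']; [lra|].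
  assert (ln x < 0) by (rewrite <- ln_1; apply ln_increasing; lra).
  left. apply exp_increasing. nra.
Qed.

Lemma Rpower_small p t : 0 < p -> 0 < t ->
  exists d, 0 < d <= 1 /\ forall x, 0 < x <= d -> Rpower x p <= t.
Proof.
  intros Hp Ht. exists (Rmin 1 (Rpower t (/ p))).
  assert (Hr := Rpower_gt0 t (/ p)). split.
  - split; [apply Rmin_glb_lt; lra | apply Rmin_l].
  - intros x Hx. apply Rle_trans with (Rpower (Rpower t (/ p)) p).
    + apply Rle_Rpower_l; [lra|]. split; [lra|]. eapply Rle_trans; [apply Hx | apply Rmin_r].
    + rewrite Rpower_mult, Rinv_l, Rpower_1 by lra. lra.
Qed.

Lemma sq_add_le u v : (u + v) ^ 2 <= 2 * u ^ 2 + 2 * v ^ 2.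
Proof. pose proof (pow2_ge_0 (u - v)). nra. Qed.

Lemma weighted_sq_add_le w u v : 0 <= w -> w * (u + v) ^ 2 <= 2 * (w * u ^ 2) + 2 * (w * v ^ 2).
Proof. intros Hw. pose proof (sq_add_le u v). nra. Qed.

Lemma sq_add_ge_half u v : 16 * v ^ 2 <= u ^ 2 -> u ^ 2 / 2 <= (u + v) ^ 2.
Proof. intros H. pose proof (pow2_ge_0 (u + 4 * v)). pose proof (pow2_ge_0 (u + 2 * v)). nra. Qed.

Lemma Rdiv_le_cross p q r t : 0 < q -> 0 < t -> p * t <= r * q -> p / q <= r / t.
Proof.
  intros Hq Ht H. apply Rmult_le_reg_r with (q * t); [nra|].
  replace (p / q * (q * t)) with (p * t) by (field; lra).
  replace (r / t * (q * t)) with (r * q) by (field; lra). lra.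
Qed.

Lemma sqrt_mul_sq l x : 0 <= l -> (sqrt l * x) ^ 2 = l * x ^ 2.
Proof. intros Hl. now rewrite Rpow_mult_distr, pow2_sqrt. Qed.

Lemma Rpower_le1 x p : 0 < x <= 1 -> 0 <= p -> Rpower x p <= 1.
Proof. intros Hx Hp. rewrite <- (Rpower_O x) by lra. now apply Rpower_le_exponent. Qed.

Lemma sqrt_le_mul_Rpower S A x r : 0 <= A -> S <= A * Rpower x (2 * r) ->
  sqrt S <= sqrt A * Rpower x r.
Proof.
  intros HA HS. rewrite <- (sqrt_pow2 (Rpower x r)) by (left; apply Rpower_gt0).
  rewrite <- sqrt_mult_alt, Rpower_sq by assumption. now apply sqrt_le_1_alt.
Qed.

Lemma sqrt_le_sq S d : 0 <= S -> sqrt S <= d -> S <= d ^ 2.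
Proof.
  intros HS Hd. rewrite <- (pow2_sqrt S HS). apply pow_incr. split; [apply sqrt_pos | exact Hd].
Qed.

Lemma div_le_of_sqrt_div_le G1 F1 G2 F2 : 0 < F1 -> 0 < F2 -> 0 <= G1 -> 0 <= G2 ->
  sqrt G1 / sqrt F1 <= sqrt G2 / sqrt F2 -> G1 / F1 <= G2 / F2.
Proof.
  intros HF1 HF2 HG1 HG2 H. rewrite <- !sqrt_div_alt in H by assumption.
  apply sqrt_le_0 in H; [assumption | |]; apply Rle_mult_inv_pos; lra.
Qed.

Lemma cv_upper_bound u l : Un_cv u l -> exists L, forall i, u i <= L.
Proof.
  intros Hu. destruct (cauchy_maj u (CV_Cauchy u (exist _ l Hu))) as [L HL].
  exists L. intros i. apply HL. now exists i.
Qed.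

(** * Coordinatewise estimates *)

(* [l] plays the role of [lambda_i = sigma_i ^ 2] and [a] of [alpha]; [x] and [e] stand for the
   coordinates [<x^dagger, u_i>] and [<e, v_i>]. *)
Section Coordinates.
Variables (l a : R).
Hypothesis l_ge0 : 0 <= l.
Hypothesis a_gt0 : 0 < a.

Let sqrt_l_sq : sqrt l * sqrt l = l := sqrt_sqrt l l_ge0.

Lemma filter_bounds : 0 <= a / (l + a) <= 1 /\ 0 <= l / (l + a) <= 1.
Proof.
  split; split; try (apply Rle_mult_inv_pos; lra);
    apply Rmult_le_reg_r with (l + a); try lra; field_simplify; lra.
Qed.

Lemma tik_coord_split x e :
  sqrt l / (l + a) * (sqrt l * x + e) = l / (l + a) * x + sqrt l / (l + a) * e.
Proof.
  pose proof sqrt_l_sq as Hs. set (s := sqrt l) in *. rewrite <- Hs. field. nra.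
Qed.

Lemma sqrt_frac_sq : (sqrt l / (l + a)) ^ 2 = l / (l + a) ^ 2.
Proof.
  pose proof sqrt_l_sq as Hs. set (s := sqrt l) in *. rewrite <- Hs. field. nra.
Qed.

Lemma err_coord_le x e :
  (sqrt l / (l + a) * (sqrt l * x + e) - x) ^ 2 <=
  2 * ((a / (l + a)) ^ 2 * x ^ 2) + 2 * (l / (l + a) ^ 2 * e ^ 2).
Proof.
  rewrite tik_coord_split, <- sqrt_frac_sq.
  replace (l / (l + a) * x + sqrt l / (l + a) * e - x)
    with (- (a / (l + a)) * x + sqrt l / (l + a) * e) by (field; lra).
  eapply Rle_trans; [apply sq_add_le | right; ring].
Qed.

Lemma tik_coord_le x e :
  (sqrt l / (l + a) * (sqrt l * x + e)) ^ 2 <= 2 * x ^ 2 + 2 * (l / (l + a) ^ 2 * e ^ 2).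
Proof.
  rewrite tik_coord_split, <- sqrt_frac_sq.
  destruct filter_bounds as [_ Hf].
  assert ((l / (l + a) * x) ^ 2 <= x ^ 2).
  { rewrite Rpow_mult_distr. pose proof (pow2_ge_0 x). assert ((l / (l + a)) ^ 2 <= 1) by nra. nra. }
  eapply Rle_trans; [apply sq_add_le|]. rewrite Rpow_mult_distr. lra.
Qed.

Lemma psi_coord_eq x e :
  a * l / (l + a) ^ 3 * (sqrt l * x + e) ^ 2 =
  a / (l + a) * (sqrt l / (l + a) * (sqrt l * x + e)) ^ 2.
Proof.
  pose proof sqrt_l_sq as Hs. set (s := sqrt l) in *. rewrite <- Hs. field. nra.
Qed.

Lemma noise_weight_bounds : 0 <= l / (l + a) ^ 2 <= / (4 * a).
Proof.
  split; [apply Rle_mult_inv_pos; [lra | apply pow_lt; lra]|].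
  apply Rmult_le_reg_r with (4 * a * (l + a) ^ 2); [apply Rmult_lt_0_compat; [lra | apply pow_lt; lra]|].
  field_simplify; [|lra|lra]. pose proof (pow2_ge_0 (l - a)). nra.
Qed.

Lemma psi_weight_bounds : 0 <= a * l / (l + a) ^ 3 <= l / (l + a) ^ 2.
Proof.
  replace (a * l / (l + a) ^ 3) with (a / (l + a) * (l / (l + a) ^ 2)) by (field; lra).
  destruct filter_bounds as [Ha _]. destruct noise_weight_bounds. nra.
Qed.

Lemma psi_exact_weight_bounds : 0 <= a * l / (l + a) ^ 3 * l <= a / (l + a).
Proof.
  destruct filter_bounds as [Ha Hl].
  replace (a * l / (l + a) ^ 3 * l) with (a / (l + a) * (l / (l + a)) ^ 2) by (field; lra).
  split; [apply Rmult_le_pos; [lra | apply pow2_ge_0]|].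
  assert ((l / (l + a)) ^ 2 <= 1) by nra. nra.
Qed.

Lemma hi_coord_bounds f : 0 <= indic (leRb a l) (a / l * f ^ 2) <= f ^ 2.
Proof.
  pose proof (pow2_ge_0 f). unfold indic, leRb. destruct Rle_dec as [Hal|]; [|lra].
  assert (0 <= a / l <= 1) by (split; [apply Rle_mult_inv_pos|apply Rmult_le_reg_r with l; field_simplify]; lra).
  nra.
Qed.

Lemma lo_coord_bounds f : 0 <= indic (leRb l a) (l / a * f ^ 2) <= f ^ 2.
Proof.
  pose proof (pow2_ge_0 f). unfold indic, leRb. destruct Rle_dec as [Hla|]; [|lra].
  assert (0 <= l / a <= 1) by (split; [apply Rle_mult_inv_pos|apply Rmult_le_reg_r with a; field_simplify]; lra).
  nra.
Qed.

Lemma low_coord_bounds f : 0 <= indic (leRb l a) (f ^ 2) <= f ^ 2.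
Proof. pose proof (pow2_ge_0 f). unfold indic. destruct leRb; lra. Qed.

Lemma noise_coord_le_hi_lo e : l / (l + a) ^ 2 * e ^ 2 <=
  / a * indic (leRb a l) (a / l * e ^ 2) + / a * indic (leRb l a) (l / a * e ^ 2).
Proof.
  pose proof (pow2_ge_0 e). pose proof (Rinv_0_lt_compat a a_gt0).
  pose proof (hi_coord_bounds e). pose proof (lo_coord_bounds e).
  unfold indic, leRb in *. destruct (Rle_dec a l) as [Hal|Hal].
  - assert (l / (l + a) ^ 2 <= 1 / l)
      by (apply Rdiv_le_cross; [apply pow_lt; lra | nra | nra]).
    replace (/ a * (a / l * e ^ 2)) with (1 / l * e ^ 2) by (field; lra). nra.
  - destruct (Rle_dec l a) as [Hla|]; [|lra].
    assert (l / (l + a) ^ 2 <= l / (a * a))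
      by (apply Rdiv_le_cross; [apply pow_lt; lra | nra | nra]).
    replace (/ a * (l / a * e ^ 2)) with (l / (a * a) * e ^ 2) by (field; lra). nra.
Qed.

Lemma lo_coord_le_psi e :
  indic (leRb l a) (l / a * e ^ 2) <= 8 * a * (a * l / (l + a) ^ 3 * e ^ 2).
Proof.
  pose proof (pow2_ge_0 e). destruct psi_weight_bounds as [Hw _].
  unfold indic, leRb. destruct (Rle_dec l a) as [Hla|].
  2:{ apply Rmult_le_pos; [lra | now apply Rmult_le_pos]. }
  replace (8 * a * (a * l / (l + a) ^ 3 * e ^ 2)) with (8 * a * a * l / (l + a) ^ 3 * e ^ 2)
    by (field; lra).
  apply Rmult_le_compat_r; [lra|]. apply Rdiv_le_cross; [lra | apply pow_lt; lra |].
  assert ((l + a) ^ 3 <= (2 * a) ^ 3) by (apply pow_incr; lra). nra.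
Qed.

Lemma hi_coord_le_psi x :
  indic (leRb a l) (a / l * x ^ 2) <= 8 * (a * l / (l + a) ^ 3 * (l * x ^ 2)).
Proof.
  pose proof (pow2_ge_0 x). destruct psi_weight_bounds as [Hw _].
  unfold indic, leRb. destruct (Rle_dec a l) as [Hal|].
  2:{ apply Rmult_le_pos; [lra | apply Rmult_le_pos; nra]. }
  replace (8 * (a * l / (l + a) ^ 3 * (l * x ^ 2))) with (8 * a * l * l / (l + a) ^ 3 * x ^ 2)
    by (field; lra).
  apply Rmult_le_compat_r; [lra|]. apply Rdiv_le_cross; [lra | apply pow_lt; lra |].
  assert ((l + a) ^ 3 <= (2 * l) ^ 3) by (apply pow_incr; lra). nra.
Qed.

Lemma approx_coord_le_low_hi x :
  (a / (l + a)) ^ 2 * x ^ 2 <= indic (leRb l a) (x ^ 2) + indic (leRb a l) (a / l * x ^ 2).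
Proof.
  pose proof (pow2_ge_0 x). pose proof (hi_coord_bounds x).
  destruct filter_bounds as [Hf _]. assert ((a / (l + a)) ^ 2 <= 1) by nra.
  unfold indic, leRb in *. destruct (Rle_dec l a); [nra|].
  destruct (Rle_dec a l); [|lra]. rewrite Rplus_0_l.
  apply Rmult_le_compat_r; [lra|].
  replace ((a / (l + a)) ^ 2) with (a * a / (l + a) ^ 2) by (field; lra).
  apply Rdiv_le_cross; [apply pow_lt; lra | lra | nra].
Qed.

Lemma tik_coord_sq x e :
  (sqrt l / (l + a) * (sqrt l * x + e)) ^ 2 = l / (l + a) ^ 2 * (sqrt l * x + e) ^ 2.
Proof. now rewrite Rpow_mult_distr, sqrt_frac_sq. Qed.

Lemma tik_coord_ge x e : a <= l -> 16 * e ^ 2 <= l * x ^ 2 ->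
  x ^ 2 / 8 <= (sqrt l / (l + a) * (sqrt l * x + e)) ^ 2.
Proof.
  intros Hal He. rewrite tik_coord_sq.
  assert (Hy : l * x ^ 2 / 2 <= (sqrt l * x + e) ^ 2)
    by (rewrite <- sqrt_mul_sq by exact l_ge0; apply sq_add_ge_half; now rewrite sqrt_mul_sq).
  assert (Hw : 1 / (4 * l) <= l / (l + a) ^ 2)
    by (apply Rdiv_le_cross; [lra | apply pow_lt; lra | nra]).
  pose proof (pow2_ge_0 x).
  apply Rle_trans with (1 / (4 * l) * (l * x ^ 2 / 2)).
  - right. field. lra.
  - apply Rmult_le_compat; [| nra | assumption | assumption].
    apply Rle_mult_inv_pos; lra.
Qed.

Lemma tik_coord_gt0 x e : 0 < l -> x <> 0 -> 16 * e ^ 2 <= l * x ^ 2 ->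
  0 < (sqrt l / (l + a) * (sqrt l * x + e)) ^ 2.
Proof.
  intros Hl Hx He. rewrite tik_coord_sq.
  assert (Hy : l * x ^ 2 / 2 <= (sqrt l * x + e) ^ 2)
    by (rewrite <- sqrt_mul_sq by exact l_ge0; apply sq_add_ge_half; now rewrite sqrt_mul_sq).
  assert (0 < l * x ^ 2)
    by (pose proof (Rsqr_pos_lt x Hx); unfold Rsqr in *; apply Rmult_lt_0_compat; nra).
  apply Rmult_lt_0_compat; [apply Rdiv_lt_0_compat; [lra | apply pow_lt; lra] | lra].
Qed.
End Coordinates.

Lemma frac_mul_Rpower_le l a s : 0 < l -> 0 < a -> 0 <= s <= 1 ->
  a / (l + a) * Rpower l s <= Rpower a s.
Proof.
  intros Hl Ha Hs.
  assert (Hsplit : forall z, 0 < z -> Rpower z s * Rpower z (1 - s) = z).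
  { intros z Hz. rewrite <- Rpower_plus. replace (s + (1 - s)) with 1 by ring.
    now rewrite Rpower_1. }
  assert (Hls : Rpower l s <= Rpower (l + a) s) by (apply Rle_Rpower_l; lra).
  assert (Ha1 : Rpower a (1 - s) <= Rpower (l + a) (1 - s)) by (apply Rle_Rpower_l; lra).
  pose proof (Hsplit a Ha) as Ea. pose proof (Hsplit (l + a) ltac:(lra)) as Eb.
  pose proof (Rpower_gt0 a s). pose proof (Rpower_gt0 (l + a) s).
  pose proof (Rpower_gt0 a (1 - s)). pose proof (Rpower_gt0 (l + a) (1 - s)).
  apply Rle_trans with (a / (l + a) * Rpower (l + a) s).
  { apply Rmult_le_compat_l; [apply Rle_mult_inv_pos|]; lra. }
  set (A1 := Rpower a s) in *. set (A2 := Rpower a (1 - s)) in *.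
  set (B1 := Rpower (l + a) s) in *. set (B2 := Rpower (l + a) (1 - s)) in *.
  rewrite <- Eb, <- Ea.
  replace (A1 * A2 / (B1 * B2) * B1) with (A1 * (A2 / B2)) by (field; lra).
  rewrite <- (Rmult_1_r A1) at 2. apply Rmult_le_compat_l; [lra|].
  rewrite <- (Rdiv_1_r 1). apply Rdiv_le_cross; lra.
Qed.

Lemma pw_sq_le l L mu m : 0 < l <= L -> m <= mu ->
  pw l mu ^ 2 <= Rpower L (2 * (mu - m)) * Rpower l (2 * m).
Proof.
  intros Hl Hm. unfold pw. destruct (Rlt_dec 0 l); [|lra].
  rewrite Rpower_sq. replace (2 * mu) with (2 * (mu - m) + 2 * m) by ring.
  rewrite Rpower_plus. apply Rmult_le_compat_r; [left; apply Rpower_gt0|].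
  apply Rle_Rpower_l; lra.
Qed.

Lemma source_coord_le l L a mu m w om : 0 <= l <= L -> 0 < a -> 0 <= m <= 1/2 -> m <= mu ->
  0 <= w <= a / (l + a) ->
  w * (pw l mu * om) ^ 2 <= Rpower L (2 * (mu - m)) * Rpower a (2 * m) * om ^ 2.
Proof.
  intros Hl Ha Hm Hmu Hw. set (K := Rpower L (2 * (mu - m))).
  assert (HK : 0 < K) by apply Rpower_gt0.
  rewrite Rpow_mult_distr, <- Rmult_assoc. apply Rmult_le_compat_r; [apply pow2_ge_0|].
  destruct (Rlt_dec 0 l) as [Hl0|Hl0].
  - apply Rle_trans with (a / (l + a) * (K * Rpower l (2 * m))).
    + apply Rmult_le_compat; [lra | apply pow2_ge_0 | lra | now apply pw_sq_le].
    + rewrite Rmult_comm, Rmult_assoc. apply Rmult_le_compat_l; [lra|].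
      rewrite Rmult_comm. apply frac_mul_Rpower_le; lra.
  - replace (pw l mu) with 0 by (unfold pw; destruct Rlt_dec; lra).
    rewrite pow_i, Rmult_0_r by lia. left. apply Rmult_lt_0_compat; [lra | apply Rpower_gt0].
Qed.

(** * Tikhonov regularization in the singular system *)

Section Tikhonov.
Variables (lam xd e : nat -> R).
Hypothesis lam_ge0 : forall i, 0 <= lam i.
Hypothesis ex_series_xd : ex_series (fun i => xd i ^ 2).
Hypothesis ex_series_e : ex_series (fun i => e i ^ 2).

Definition hi_sum (f : nat -> R) a := ssum (fun i => indic (leRb a (lam i)) (a / lam i * f i ^ 2)).
Definition lo_sum (f : nat -> R) a := ssum (fun i => indic (leRb (lam i) a) (lam i / a * f i ^ 2)).
Definition low_sum (f : nat -> R) a := ssum (fun i => indic (leRb (lam i) a) (f i ^ 2)).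

(* [tik_norm2 a = ||x_a^delta||^2], [approx_err2 a = ||x_a - x^dagger||^2],
   [noise_err2 a = ||x_a^delta - x_a||^2] and [psi_SL2 a = psi_SL(a)^2]; [psi_SL2_exact] and
   [psi_SL2_noise] are [psi_SL2] with [y_delta] replaced by [y] and by [e]. *)
Definition tik_norm2 a := ssum (fun i => xtik lam xd e a i ^ 2).
Definition approx_err2 a := ssum (fun i => (a / (lam i + a)) ^ 2 * xd i ^ 2).
Definition noise_err2 a := ssum (fun i => lam i / (lam i + a) ^ 2 * e i ^ 2).
Definition psi_SL2 a := ssum (fun i => a * lam i / (lam i + a) ^ 3 * ydc lam xd e i ^ 2).
Definition psi_SL2_exact a := ssum (fun i => a * lam i / (lam i + a) ^ 3 * (lam i * xd i ^ 2)).
Definition psi_SL2_noise a := ssum (fun i => a * lam i / (lam i + a) ^ 3 * e i ^ 2).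

Section Fixed_alpha.
Variable a : R.
Hypothesis a_gt0 : 0 < a.

Lemma ex_series_hi_sum f : ex_series (fun i => f i ^ 2) ->
  ex_series (fun i => indic (leRb a (lam i)) (a / lam i * f i ^ 2)).
Proof.
  apply ex_series_le. intros i. now apply hi_coord_bounds.
Qed.

Lemma ex_series_lo_sum f : ex_series (fun i => f i ^ 2) ->
  ex_series (fun i => indic (leRb (lam i) a) (lam i / a * f i ^ 2)).
Proof.
  apply ex_series_le. intros i. now apply lo_coord_bounds.
Qed.

Lemma ex_series_low_sum f : ex_series (fun i => f i ^ 2) ->
  ex_series (fun i => indic (leRb (lam i) a) (f i ^ 2)).
Proof. apply ex_series_le. intros i. apply low_coord_bounds. Qed.

Lemma noise_err2_terms_bounds i :
  0 <= lam i / (lam i + a) ^ 2 * e i ^ 2 <= / (4 * a) * e i ^ 2.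
Proof.
  destruct (noise_weight_bounds (lam i) a); auto. pose proof (pow2_ge_0 (e i)).
  split; [apply Rmult_le_pos|apply Rmult_le_compat_r]; lra.
Qed.

Lemma ex_series_noise_err2 : ex_series (fun i => lam i / (lam i + a) ^ 2 * e i ^ 2).
Proof. exact (ex_series_le_scal _ _ _ noise_err2_terms_bounds ex_series_e). Qed.

Lemma noise_err2_le : noise_err2 a <= / (4 * a) * ssum (fun i => e i ^ 2).
Proof. exact (ssum_le_scal _ _ _ noise_err2_terms_bounds ex_series_e). Qed.

Lemma noise_err2_ge0 : 0 <= noise_err2 a.
Proof. apply ssum_ge0, ex_series_noise_err2. intros i. apply noise_err2_terms_bounds. Qed.

Lemma psi_SL2_noise_terms_bounds i :
  0 <= a * lam i / (lam i + a) ^ 3 * e i ^ 2 <= lam i / (lam i + a) ^ 2 * e i ^ 2.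
Proof.
  destruct (psi_weight_bounds (lam i) a); auto. pose proof (pow2_ge_0 (e i)).
  split; [apply Rmult_le_pos|apply Rmult_le_compat_r]; lra.
Qed.

Lemma ex_series_psi_SL2_noise : ex_series (fun i => a * lam i / (lam i + a) ^ 3 * e i ^ 2).
Proof. exact (ex_series_le _ _ psi_SL2_noise_terms_bounds ex_series_noise_err2). Qed.

Lemma psi_SL2_noise_le_noise_err2 : psi_SL2_noise a <= noise_err2 a.
Proof. exact (ssum_le _ _ psi_SL2_noise_terms_bounds ex_series_noise_err2). Qed.

Lemma tik_norm2_terms_bounds i : 0 <= xtik lam xd e a i ^ 2 <=
  2 * xd i ^ 2 + 2 * (lam i / (lam i + a) ^ 2 * e i ^ 2).
Proof. split; [apply pow2_ge_0 | apply tik_coord_le; auto]. Qed.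

Lemma ex_series_tik_norm2 : ex_series (fun i => xtik lam xd e a i ^ 2).
Proof.
  exact (ex_series_le_comb _ _ _ _ _ tik_norm2_terms_bounds ex_series_xd ex_series_noise_err2).
Qed.

Lemma tik_norm2_le : tik_norm2 a <= 2 * ssum (fun i => xd i ^ 2) + 2 * noise_err2 a.
Proof.
  exact (ssum_le_comb _ _ _ _ _ tik_norm2_terms_bounds ex_series_xd ex_series_noise_err2).
Qed.

Lemma psi_SL2_terms_bounds i :
  0 <= a * lam i / (lam i + a) ^ 3 * ydc lam xd e i ^ 2 <= xtik lam xd e a i ^ 2.
Proof.
  unfold xtik, ydc. rewrite psi_coord_eq by auto.
  destruct (filter_bounds (lam i) a) as [Hf _]; auto.
  set (t := (sqrt (lam i) / (lam i + a) * (sqrt (lam i) * xd i + e i)) ^ 2).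
  assert (0 <= t) by apply pow2_ge_0. split; [apply Rmult_le_pos; lra|].
  apply Rle_trans with (1 * t); [apply Rmult_le_compat_r|]; lra.
Qed.

Lemma ex_series_psi_SL2 : ex_series (fun i => a * lam i / (lam i + a) ^ 3 * ydc lam xd e i ^ 2).
Proof. exact (ex_series_le _ _ psi_SL2_terms_bounds ex_series_tik_norm2). Qed.

Lemma psi_SL2_ge0 : 0 <= psi_SL2 a.
Proof. apply ssum_ge0, ex_series_psi_SL2. intros i. apply psi_SL2_terms_bounds. Qed.

Lemma tik_norm2_le_psi_SL2 L : (forall i, lam i <= L) -> tik_norm2 a <= (L + a) / a * psi_SL2 a.
Proof.
  intros HL. apply ssum_le_scal; [|exact ex_series_psi_SL2]. intros i.
  unfold xtik, ydc. rewrite psi_coord_eq by auto.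
  set (t := (sqrt (lam i) / (lam i + a) * (sqrt (lam i) * xd i + e i)) ^ 2).
  assert (0 <= t) by apply pow2_ge_0. split; [assumption|].
  specialize (HL i). pose proof (lam_ge0 i).
  replace ((L + a) / a * (a / (lam i + a) * t)) with ((L + a) / (lam i + a) * t) by (field; lra).
  rewrite <- (Rmult_1_l t) at 1. apply Rmult_le_compat_r; [assumption|].
  rewrite <- (Rdiv_1_r 1). apply Rdiv_le_cross; lra.
Qed.

Lemma psi_SL2_exact_terms_bounds i :
  0 <= a * lam i / (lam i + a) ^ 3 * (lam i * xd i ^ 2) <=
  2 * (a * lam i / (lam i + a) ^ 3 * ydc lam xd e i ^ 2) +
  2 * (a * lam i / (lam i + a) ^ 3 * e i ^ 2).
Proof.
  destruct (psi_weight_bounds (lam i) a) as [Hw _]; auto.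
  rewrite <- (sqrt_mul_sq (lam i) (xd i)) by auto. split; [apply Rmult_le_pos; [|apply pow2_ge_0]; lra|].
  replace (sqrt (lam i) * xd i) with (ydc lam xd e i + - e i) by (unfold ydc; ring).
  eapply Rle_trans; [apply weighted_sq_add_le; lra | right; ring].
Qed.

Lemma ex_series_psi_SL2_exact :
  ex_series (fun i => a * lam i / (lam i + a) ^ 3 * (lam i * xd i ^ 2)).
Proof.
  apply (ex_series_le_scal 1 _ (fun i => xd i ^ 2)); [|exact ex_series_xd]. intros i.
  destruct (psi_exact_weight_bounds (lam i) a) as [Hw Hw']; auto.
  destruct (filter_bounds (lam i) a) as [Hf _]; auto.
  pose proof (pow2_ge_0 (xd i)). rewrite <- Rmult_assoc. split; [nra|].
  apply Rmult_le_compat_r; lra.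
Qed.

Lemma psi_SL2_exact_le : psi_SL2_exact a <= 2 * psi_SL2 a + 2 * psi_SL2_noise a.
Proof.
  exact (ssum_le_comb _ _ _ _ _ psi_SL2_exact_terms_bounds
           ex_series_psi_SL2 ex_series_psi_SL2_noise).
Qed.

Lemma psi_SL2_le : psi_SL2 a <= 2 * psi_SL2_exact a + 2 * psi_SL2_noise a.
Proof.
  apply ssum_le_comb; [|exact ex_series_psi_SL2_exact | exact ex_series_psi_SL2_noise].
  intros i. split; [apply psi_SL2_terms_bounds|].
  destruct (psi_weight_bounds (lam i) a) as [Hw _]; auto.
  rewrite <- (sqrt_mul_sq (lam i) (xd i)) by auto. now apply weighted_sq_add_le.
Qed.

Lemma psi_SL2_noise_le : psi_SL2_noise a <= 2 * psi_SL2 a + 2 * psi_SL2_exact a.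
Proof.
  apply ssum_le_comb; [|exact ex_series_psi_SL2 | exact ex_series_psi_SL2_exact].
  intros i. split; [apply psi_SL2_noise_terms_bounds|].
  destruct (psi_weight_bounds (lam i) a) as [Hw _]; auto.
  rewrite <- (sqrt_mul_sq (lam i) (xd i)) by auto.
  replace (e i) with (ydc lam xd e i + - (sqrt (lam i) * xd i)) at 1 by (unfold ydc; ring).
  eapply Rle_trans; [apply weighted_sq_add_le; lra | right; ring].
Qed.

Lemma approx_err2_terms_bounds i : 0 <= (a / (lam i + a)) ^ 2 * xd i ^ 2 <=
  indic (leRb (lam i) a) (xd i ^ 2) + indic (leRb a (lam i)) (a / lam i * xd i ^ 2).
Proof.
  split; [apply Rmult_le_pos; apply pow2_ge_0 | apply approx_coord_le_low_hi; auto].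
Qed.

Lemma ex_series_approx_err2 : ex_series (fun i => (a / (lam i + a)) ^ 2 * xd i ^ 2).
Proof.
  eapply (ex_series_le_comb 1 1);
    [| apply (ex_series_low_sum xd) | apply (ex_series_hi_sum xd)]; auto.
  intros i. rewrite !Rmult_1_l. apply approx_err2_terms_bounds.
Qed.

Lemma approx_err2_le_low_hi : approx_err2 a <= low_sum xd a + hi_sum xd a.
Proof.
  rewrite <- (Rmult_1_l (low_sum _ _)), <- (Rmult_1_l (hi_sum _ _)).
  apply ssum_le_comb; [| apply (ex_series_low_sum xd) | apply (ex_series_hi_sum xd)]; auto.
  intros i. rewrite !Rmult_1_l. apply approx_err2_terms_bounds.
Qed.

Lemma hi_sum_le_psi_SL2_exact : hi_sum xd a <= 8 * psi_SL2_exact a.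
Proof.
  apply ssum_le_scal; [|exact ex_series_psi_SL2_exact]. intros i.
  split; [apply hi_coord_bounds | apply hi_coord_le_psi]; auto.
Qed.

Lemma noise_err2_le_psi_SL2_noise C : hi_sum e a <= C * lo_sum e a ->
  noise_err2 a <= 8 * (Rabs C + 1) * psi_SL2_noise a.
Proof.
  intros HMC.
  assert (Hsplit : noise_err2 a <= / a * hi_sum e a + / a * lo_sum e a).
  { apply ssum_le_comb; [| apply ex_series_hi_sum | apply ex_series_lo_sum]; auto.
    intros i. split; [apply noise_err2_terms_bounds | apply noise_coord_le_hi_lo; auto]. }
  assert (Hlo : lo_sum e a <= 8 * a * psi_SL2_noise a).
  { apply ssum_le_scal; [|exact ex_series_psi_SL2_noise]. intros i.
    split; [apply lo_coord_bounds | apply lo_coord_le_psi]; auto. }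
  assert (Hlo0 : 0 <= lo_sum e a).
  { apply ssum_ge0; [|apply ex_series_lo_sum; auto]. intros i. apply lo_coord_bounds; auto. }
  assert (HC : C * lo_sum e a <= Rabs C * lo_sum e a)
    by (apply Rmult_le_compat_r; [assumption | apply Rle_abs]).
  pose proof (Rabs_pos C). pose proof (Rinv_0_lt_compat a a_gt0).
  apply Rle_trans with (/ a * ((Rabs C + 1) * lo_sum e a)); [nra|].
  apply Rle_trans with (/ a * ((Rabs C + 1) * (8 * a * psi_SL2_noise a))).
  - apply Rmult_le_compat_l; [lra|]. apply Rmult_le_compat_l; lra.
  - right. field. lra.
Qed.

Lemma err2_le : ssum (fun i => (xtik lam xd e a i - xd i) ^ 2) <=
  2 * approx_err2 a + 2 * noise_err2 a.
Proof.
  apply ssum_le_comb; [| exact ex_series_approx_err2 | exact ex_series_noise_err2].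
  intros i. split; [apply pow2_ge_0 | apply err_coord_le; auto].
Qed.
End Fixed_alpha.
End Tikhonov.

(** * The source condition *)

Lemma source_lam_gt0 (lam om xd : nat -> R) mu i : xd i = pw (lam i) mu * om i -> xd i <> 0 -> 0 < lam i.
Proof.
  intros Hsrc Hx. destruct (Rlt_dec 0 (lam i)) as [Hl|Hl]; [exact Hl|].
  exfalso. apply Hx. rewrite Hsrc. unfold pw. destruct Rlt_dec; [contradiction | ring].
Qed.

Lemma ex_series_source (lam om xd : nat -> R) L mu : (forall i, 0 <= lam i <= L) -> 0 <= mu ->
  ex_series (fun i => om i ^ 2) -> (forall i, xd i = pw (lam i) mu * om i) ->
  ex_series (fun i => xd i ^ 2).
Proof.
  intros Hlam Hmu Hom Hsrc.
  apply (ex_series_le_scal (Rpower L (2 * mu)) _ (fun i => om i ^ 2)); [|exact Hom].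
  intros i. rewrite Hsrc, Rpow_mult_distr. split; [apply Rmult_le_pos; apply pow2_ge_0|].
  apply Rmult_le_compat_r; [apply pow2_ge_0|].
  destruct (Rlt_dec 0 (lam i)) as [Hl|Hl].
  - pose proof (pw_sq_le (lam i) L mu 0 (conj Hl (proj2 (Hlam i))) Hmu) as H.
    rewrite Rmult_0_r, Rpower_O, Rmult_1_r, Rminus_0_r in H by exact Hl. exact H.
  - replace (pw (lam i) mu) with 0 by (unfold pw; destruct Rlt_dec; lra).
    rewrite pow_i by lia. left. apply Rpower_gt0.
Qed.

Section Source_condition.
Variables (lam om xd : nat -> R) (L mu m : R).
Hypothesis lam_bounds : forall i, 0 <= lam i <= L.
Hypothesis m_range : 0 <= m <= 1/2.
Hypothesis m_le_mu : m <= mu.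
Hypothesis ex_series_om : ex_series (fun i => om i ^ 2).
Hypothesis source : forall i, xd i = pw (lam i) mu * om i.

Lemma approx_err2_source_le a : 0 < a ->
  approx_err2 lam xd a <= Rpower L (2 * (mu - m)) * ssum (fun i => om i ^ 2) * Rpower a (2 * m).
Proof.
  intros Ha. rewrite Rmult_assoc, (Rmult_comm (ssum _)), <- Rmult_assoc.
  apply ssum_le_scal; [|exact ex_series_om]. intros i. rewrite source.
  destruct (filter_bounds (lam i) a) as [Hf _]; [apply lam_bounds | exact Ha |].
  split; [apply Rmult_le_pos; apply pow2_ge_0|].
  apply source_coord_le; auto. split; [apply pow2_ge_0 | nra].
Qed.

Lemma psi_SL2_exact_source_le a : 0 < a ->
  psi_SL2_exact lam xd a <= Rpower L (2 * (mu - m)) * ssum (fun i => om i ^ 2) * Rpower a (2 * m).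
Proof.
  intros Ha. rewrite Rmult_assoc, (Rmult_comm (ssum _)), <- Rmult_assoc.
  apply ssum_le_scal; [|exact ex_series_om]. intros i. rewrite source, <- Rmult_assoc.
  pose proof (psi_exact_weight_bounds (lam i) a (proj1 (lam_bounds i)) Ha) as Hw.
  split; [apply Rmult_le_pos; [lra | apply pow2_ge_0]|].
  apply source_coord_le; auto.
Qed.
End Source_condition.

(** * Convergence rate of the simple-L ratio minimizer *)

Section Rate.
Variables (lam xd : nat -> R) (L alpha_max C2 m cG : R) (i0 : nat).
Hypothesis lam_ge0 : forall i, 0 <= lam i.
Hypothesis lam_le : forall i, lam i <= L.
Hypothesis alpha_max_gt0 : 0 < alpha_max.
Hypothesis m_range : 0 < m <= 1/2.
Hypothesis ex_series_xd : ex_series (fun i => xd i ^ 2).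
Hypothesis cG_ge0 : 0 <= cG.
(* Only these two consequences of the source condition enter the argument. *)
Hypothesis approx_rate : forall a, 0 < a -> approx_err2 lam xd a <= cG * Rpower a (2 * m).
Hypothesis exact_rate : forall a, 0 < a -> psi_SL2_exact lam xd a <= cG * Rpower a (2 * m).
Hypothesis lam_i0 : 0 < lam i0.
Hypothesis xd_i0 : xd i0 <> 0.

(* With the reference parameter [delta ^ q] one has [delta ^ 2 = delta ^ p * delta ^ q] and
   [(delta ^ q) ^ (2 m) = delta ^ p]: it balances the approximation error [alpha ^ (2 m)]
   against the propagated noise [delta ^ 2 / alpha], and [delta ^ p] is the resulting rate. *)
Let p := 4 * m / (2 * m + 1).
Let q := 2 / (2 * m + 1).

Let X := ssum (fun i => xd i ^ 2).
(* With [eps = delta ^ p]: [K1 * eps] bounds [psi_SL2 / tik_norm2] at the reference parameter,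
   [K2] is the factor through which MC_2 controls the propagated noise, and [K3 * eps] bounds
   that noise at the minimizer. *)
Let K1 := 16 * (cG + 1/4) / xd i0 ^ 2.
Let K2 := 8 * (Rabs C2 + 1).
Let K3 := 8 * K2 * K1 * X + 4 * K2 * cG + 1/4.

Let X_ge0 : 0 <= X.
Proof. apply ssum_ge0; [intros; apply pow2_ge_0 | exact ex_series_xd]. Qed.

Let xd_i0_sq_gt0 : 0 < xd i0 ^ 2.
Proof. pose proof (Rsqr_pos_lt _ xd_i0). unfold Rsqr in *. nra. Qed.

Let K1_gt0 : 0 < K1.
Proof. apply Rdiv_lt_0_compat; lra. Qed.

Let K2_ge8 : 8 <= K2.
Proof. pose proof (Rabs_pos C2). unfold K2. lra. Qed.

Let K3_ge : 1/4 <= K3.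
Proof. assert (0 <= K2 * K1 * X) by (apply Rmult_le_pos; [nra | lra]). unfold K3. nra. Qed.

Definition noise_level_small delta :=
  0 < delta <= 1 /\ Rpower delta q <= lam i0 /\ Rpower delta q < alpha_max /\
  Rpower delta p <= / (8 * K2 * K1) /\ 16 * delta ^ 2 <= lam i0 * xd i0 ^ 2.

Lemma noise_level_small_eventually :
  exists delta0, 0 < delta0 /\ forall delta, 0 < delta <= delta0 -> noise_level_small delta.
Proof.
  assert (Hq : 0 < q) by (apply Rdiv_lt_0_compat; lra).
  assert (Hp : 0 < p) by (apply Rdiv_lt_0_compat; lra).
  destruct (Rpower_small q (Rmin (lam i0) (alpha_max / 2)) Hq) as [d1 [Hd1 Hq1]].
  { apply Rmin_glb_lt; lra. }
  destruct (Rpower_small p (/ (8 * K2 * K1)) Hp) as [d2 [Hd2 Hp2]].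
  { apply Rinv_0_lt_compat. nra. }
  set (d3 := sqrt (lam i0 * xd i0 ^ 2 / 16)).
  assert (Hd3 : 0 < d3) by (apply sqrt_lt_R0; nra).
  exists (Rmin (Rmin d1 d2) d3). split; [repeat apply Rmin_glb_lt; lra|].
  intros delta [Hd0 Hd].
  assert (Hd1' : delta <= d1) by (eapply Rle_trans; [apply Hd | eapply Rle_trans; apply Rmin_l]).
  assert (Hd2' : delta <= d2)
    by (eapply Rle_trans; [apply Hd | eapply Rle_trans; [apply Rmin_l | apply Rmin_r]]).
  assert (Hd3' : delta <= d3) by (eapply Rle_trans; [apply Hd | apply Rmin_r]).
  assert (Hqd := Hq1 delta (conj Hd0 Hd1')).
  pose proof (Rmin_l (lam i0) (alpha_max / 2)). pose proof (Rmin_r (lam i0) (alpha_max / 2)).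
  repeat split; try lra.
  - now apply Hp2.
  - assert (delta ^ 2 <= d3 ^ 2) by (apply pow_incr; lra).
    unfold d3 in *. rewrite pow2_sqrt in * by nra. lra.
Qed.

Section Minimizer.
Variables (delta a : R) (e : nat -> R).
Hypothesis delta_small : noise_level_small delta.
Hypothesis ex_series_e : ex_series (fun i => e i ^ 2).
Hypothesis e_norm_le : sqrt (ssum (fun i => e i ^ 2)) <= delta.
Hypothesis MC2_e : MC2 lam e alpha_max C2.
Hypothesis a_range : 0 < a < alpha_max.
Hypothesis a_min : forall alpha, 0 < alpha < alpha_max ->
  psi_SLR lam xd e a <= psi_SLR lam xd e alpha.

Let eps := Rpower delta p.
Let a_ref := Rpower delta q.

Let eps_range : 0 < eps <= 1.
Proof.
  destruct delta_small as [Hd _]. split; [apply Rpower_gt0 | apply Rpower_le1; [lra|]].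
  apply Rle_mult_inv_pos; lra.
Qed.

Let a_ref_gt0 : 0 < a_ref.
Proof. apply Rpower_gt0. Qed.

Lemma a_ref_Rpower : Rpower a_ref (2 * m) = eps.
Proof. unfold a_ref, eps. rewrite Rpower_mult. f_equal. unfold p, q. field. lra. Qed.

Lemma delta_sq_eq : delta ^ 2 = eps * a_ref.
Proof.
  destruct delta_small as [Hd _]. unfold eps, a_ref. rewrite <- Rpower_plus.
  replace (p + q) with (INR 2) by (unfold p, q, INR; field; lra).
  now rewrite Rpower_pow by lra.
Qed.

Lemma e_norm2_le : ssum (fun i => e i ^ 2) <= delta ^ 2.
Proof.
  apply sqrt_le_sq; [|exact e_norm_le].
  apply ssum_ge0; [intros; apply pow2_ge_0 | exact ex_series_e].
Qed.

Lemma e_i0_small : 16 * e i0 ^ 2 <= lam i0 * xd i0 ^ 2.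
Proof.
  destruct delta_small as (_ & _ & _ & _ & Hd).
  pose proof e_norm2_le.
  assert (e i0 ^ 2 <= ssum (fun i => e i ^ 2))
    by (apply (ssum_ge_term (fun i => e i ^ 2)); [intros; apply pow2_ge_0 | exact ex_series_e]).
  lra.
Qed.

Lemma tik_norm2_gt0 alpha : 0 < alpha -> 0 < tik_norm2 lam xd e alpha.
Proof.
  intros Halpha. apply Rlt_le_trans with (xtik lam xd e alpha i0 ^ 2).
  - apply tik_coord_gt0; auto using e_i0_small.
  - apply (ssum_ge_term (fun i => xtik lam xd e _ i ^ 2));
      [intros; apply pow2_ge_0 | now apply ex_series_tik_norm2].
Qed.

Lemma tik_norm2_ref_ge : xd i0 ^ 2 / 8 <= tik_norm2 lam xd e a_ref.
Proof.
  destruct delta_small as (_ & Hq & _).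
  apply Rle_trans with (xtik lam xd e a_ref i0 ^ 2).
  - apply tik_coord_ge; auto using e_i0_small.
  - apply (ssum_ge_term (fun i => xtik lam xd e _ i ^ 2));
      [intros; apply pow2_ge_0 | now apply ex_series_tik_norm2].
Qed.

Lemma noise_err2_le_eps alpha : a_ref <= alpha -> noise_err2 lam e alpha <= eps / 4.
Proof.
  intros Halpha. eapply Rle_trans; [apply noise_err2_le; auto; lra|].
  pose proof eps_range. pose proof e_norm2_le. rewrite delta_sq_eq in *.
  apply Rle_trans with (/ (4 * alpha) * (eps * a_ref)).
  - apply Rmult_le_compat_l; [left; apply Rinv_0_lt_compat|]; lra.
  - apply Rmult_le_reg_r with (4 * alpha); [lra|].
    replace (/ (4 * alpha) * (eps * a_ref) * (4 * alpha)) with (eps * a_ref) by (field; lra).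
    replace (eps / 4 * (4 * alpha)) with (eps * alpha) by field.
    apply Rmult_le_compat_l; lra.
Qed.

Lemma psi_SL2_ref_le : psi_SL2 lam xd e a_ref <= 2 * (cG + 1/4) * eps.
Proof.
  assert (psi_SL2 lam xd e a_ref <=
          2 * psi_SL2_exact lam xd a_ref + 2 * psi_SL2_noise lam e a_ref)
    by (apply psi_SL2_le; auto).
  assert (psi_SL2_noise lam e a_ref <= noise_err2 lam e a_ref)
    by (apply psi_SL2_noise_le_noise_err2; auto).
  pose proof (exact_rate a_ref a_ref_gt0). rewrite a_ref_Rpower in *.
  pose proof (noise_err2_le_eps a_ref (Rle_refl _)). lra.
Qed.

Lemma psi_SL2_minimizer_le : psi_SL2 lam xd e a <= K1 * eps * tik_norm2 lam xd e a.
Proof.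
  destruct delta_small as (_ & _ & Hq & _).
  pose proof (tik_norm2_gt0 a (proj1 a_range)) as HF.
  pose proof (tik_norm2_gt0 a_ref a_ref_gt0) as HFref.
  assert (Hratio : psi_SL2 lam xd e a / tik_norm2 lam xd e a <=
                   psi_SL2 lam xd e a_ref / tik_norm2 lam xd e a_ref).
  { apply div_le_of_sqrt_div_le; auto; try (apply psi_SL2_ge0; auto; lra).
    exact (a_min a_ref (conj a_ref_gt0 Hq)). }
  assert (Hratio_ref : psi_SL2 lam xd e a_ref / tik_norm2 lam xd e a_ref <= K1 * eps).
  { pose proof tik_norm2_ref_ge. pose proof psi_SL2_ref_le. pose proof eps_range.
    apply Rmult_le_reg_r with (tik_norm2 lam xd e a_ref); [lra|].
    unfold Rdiv. rewrite Rmult_assoc, Rinv_l, Rmult_1_r by lra.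
    apply Rle_trans with (2 * (cG + 1/4) * eps); [assumption|].
    replace (2 * (cG + 1/4) * eps) with (K1 * eps * (xd i0 ^ 2 / 8)) by (unfold K1; field; lra).
    apply Rmult_le_compat_l; nra. }
  apply Rmult_le_reg_r with (/ tik_norm2 lam xd e a); [now apply Rinv_0_lt_compat|].
  rewrite Rmult_assoc, Rinv_r, Rmult_1_r by lra. lra.
Qed.

Lemma minimizer_le : a <= K1 * (L + alpha_max) * eps.
Proof.
  pose proof (tik_norm2_gt0 a (proj1 a_range)) as HF. pose proof psi_SL2_minimizer_le.
  assert (tik_norm2 lam xd e a <= (L + a) / a * psi_SL2 lam xd e a)
    by (apply tik_norm2_le_psi_SL2; auto; lra).
  assert (HL : 0 <= L) by (pose proof (lam_le i0); lra).
  pose proof eps_range.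
  assert (Hone : 1 <= (L + a) / a * (K1 * eps)).
  { apply Rmult_le_reg_r with (tik_norm2 lam xd e a); [lra|].
    assert (0 <= (L + a) / a) by (apply Rle_mult_inv_pos; lra).
    assert ((L + a) / a * psi_SL2 lam xd e a <= (L + a) / a * (K1 * eps * tik_norm2 lam xd e a))
      by (apply Rmult_le_compat_l; lra).
    nra. }
  assert (Ha : a <= (L + a) * (K1 * eps)).
  { apply Rmult_le_reg_r with (/ a); [apply Rinv_0_lt_compat; lra|].
    rewrite Rinv_r by lra. unfold Rdiv in Hone. nra. }
  assert (0 <= K1 * eps) by nra. nra.
Qed.

Lemma noise_err2_minimizer_le_of_lt : a < a_ref ->
  noise_err2 lam e a <= (8 * K2 * K1 * X + 4 * K2 * cG) * eps.
Proof.
  intros Hlt. destruct delta_small as (_ & _ & _ & Hp & _). fold eps in Hp.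
  assert (noise_err2 lam e a <= K2 * psi_SL2_noise lam e a).
  { apply noise_err2_le_psi_SL2_noise; auto; [lra|]. apply MC2_e; lra. }
  assert (psi_SL2_noise lam e a <= 2 * psi_SL2 lam xd e a + 2 * psi_SL2_exact lam xd a)
    by (apply psi_SL2_noise_le; auto; lra).
  assert (psi_SL2_exact lam xd a <= cG * eps).
  { rewrite <- a_ref_Rpower. eapply Rle_trans; [apply exact_rate; lra|].
    apply Rmult_le_compat_l; [lra|]. apply Rle_Rpower_l; lra. }
  assert (tik_norm2 lam xd e a <= 2 * X + 2 * noise_err2 lam e a)
    by (apply tik_norm2_le; auto; lra).
  pose proof psi_SL2_minimizer_le. pose proof eps_range.
  assert (0 <= noise_err2 lam e a) by (apply noise_err2_ge0; auto; lra).
  (* Since [4 K2 K1 eps <= 1/2], the noise term reappearing on the right is absorbed. *)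
  assert (8 * (K2 * K1 * eps) <= 1).
  { replace (K2 * K1 * eps) with ((8 * K2 * K1) * eps / 8) by field.
    apply Rmult_le_compat_l with (r := 8 * K2 * K1) in Hp; [|nra].
    rewrite Rinv_r in Hp by nra. lra. }
  assert (psi_SL2 lam xd e a <= K1 * eps * (2 * X + 2 * noise_err2 lam e a))
    by (eapply Rle_trans; [eassumption | apply Rmult_le_compat_l; nra]).
  assert (noise_err2 lam e a <=
          4 * (K2 * K1 * eps) * X + 4 * (K2 * K1 * eps) * noise_err2 lam e a + 2 * K2 * cG * eps)
    by nra.
  nra.
Qed.

Lemma noise_err2_minimizer_le : noise_err2 lam e a <= K3 * eps.
Proof.
  pose proof eps_range. unfold K3.
  destruct (Rle_lt_dec a_ref a) as [Hge|Hlt].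
  - pose proof (noise_err2_le_eps a Hge).
    assert (0 <= (8 * K2 * K1 * X + 4 * K2 * cG) * eps)
      by (apply Rmult_le_pos; [assert (0 <= K2 * K1 * X) by (apply Rmult_le_pos; nra); nra | lra]).
    nra.
  - pose proof (noise_err2_minimizer_le_of_lt Hlt). nra.
Qed.

Lemma err2_minimizer_le :
  ssum (fun i => (xtik lam xd e a i - xd i) ^ 2) <=
  (2 * cG * Rpower (K1 * (L + alpha_max)) (2 * m) + 2 * K3) * Rpower eps (2 * m).
Proof.
  pose proof eps_range. pose proof noise_err2_minimizer_le.
  assert (HL : 0 < L) by (pose proof (lam_le i0); lra).
  assert (Herr : ssum (fun i => (xtik lam xd e a i - xd i) ^ 2) <=
                 2 * approx_err2 lam xd a + 2 * noise_err2 lam e a)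
    by (apply err2_le; auto; lra).
  assert (Hap : approx_err2 lam xd a <= cG * Rpower a (2 * m)) by (apply approx_rate; lra).
  assert (Ha : Rpower a (2 * m) <= Rpower (K1 * (L + alpha_max)) (2 * m) * Rpower eps (2 * m)).
  { rewrite Rpower_mult_distr by nra. apply Rle_Rpower_l; [lra|].
    split; [lra | apply minimizer_le]. }
  assert (Heps : eps <= Rpower eps (2 * m)).
  { rewrite <- (Rpower_1 eps) at 1 by lra. apply Rpower_le_exponent; lra. }
  assert (cG * Rpower a (2 * m) <=
          cG * (Rpower (K1 * (L + alpha_max)) (2 * m) * Rpower eps (2 * m)))
    by (apply Rmult_le_compat_l; lra).
  assert (K3 * eps <= K3 * Rpower eps (2 * m)) by (apply Rmult_le_compat_l; lra).
  lra.
Qed.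

Lemma hi_sum_minimizer_le : hi_sum lam xd a <= 16 * (2 * K1 * X + 2 * K1 * K3 + K3) * eps.
Proof.
  pose proof eps_range. pose proof noise_err2_minimizer_le. pose proof psi_SL2_minimizer_le.
  assert (hi_sum lam xd a <= 8 * psi_SL2_exact lam xd a)
    by (apply hi_sum_le_psi_SL2_exact; auto; lra).
  assert (psi_SL2_exact lam xd a <= 2 * psi_SL2 lam xd e a + 2 * psi_SL2_noise lam e a)
    by (apply psi_SL2_exact_le; auto; lra).
  assert (psi_SL2_noise lam e a <= noise_err2 lam e a)
    by (apply psi_SL2_noise_le_noise_err2; auto; lra).
  assert (tik_norm2 lam xd e a <= 2 * X + 2 * noise_err2 lam e a)
    by (apply tik_norm2_le; auto; lra).
  assert (K1 * eps * tik_norm2 lam xd e a <= K1 * eps * (2 * X + 2 * (K3 * eps)))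
    by (apply Rmult_le_compat_l; nra).
  assert (HK : 0 <= K1 * K3 * eps) by (apply Rmult_le_pos; [apply Rmult_le_pos|]; lra).
  assert (K1 * K3 * eps * eps <= K1 * K3 * eps) by nra.
  lra.
Qed.

Lemma approx_err2_minimizer_le_of_low_hi D : 0 <= D ->
  (forall alpha, 0 < alpha < alpha_max -> low_sum lam xd alpha <= D * hi_sum lam xd alpha) ->
  approx_err2 lam xd a <= (cG + 16 * (D + 1) * (2 * K1 * X + 2 * K1 * K3 + K3)) * eps.
Proof.
  intros HD Hlow. pose proof eps_range.
  assert (Hhi0 : 0 <= hi_sum lam xd a).
  { apply ssum_ge0; [intros; apply hi_coord_bounds; auto; lra|].
    apply ex_series_hi_sum; auto; lra. }
  assert (Hhi : (D + 1) * hi_sum lam xd a <=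
                (D + 1) * (16 * (2 * K1 * X + 2 * K1 * K3 + K3) * eps))
    by (apply Rmult_le_compat_l; [lra | apply hi_sum_minimizer_le]).
  assert (0 <= cG * eps) by nra.
  destruct (Rle_lt_dec a a_ref) as [Hle|Hgt].
  - assert (approx_err2 lam xd a <= cG * eps).
    { rewrite <- a_ref_Rpower. eapply Rle_trans; [apply approx_rate; lra|].
      apply Rmult_le_compat_l; [lra|]. apply Rle_Rpower_l; lra. }
    nra.
  - assert (approx_err2 lam xd a <= low_sum lam xd a + hi_sum lam xd a)
      by (apply approx_err2_le_low_hi; auto; lra).
    pose proof (Hlow a a_range). nra.
Qed.
End Minimizer.

Lemma err_minimizer_rate : exists C, 0 < C /\
  forall delta a e, noise_level_small delta ->
    ex_series (fun i => e i ^ 2) -> sqrt (ssum (fun i => e i ^ 2)) <= delta ->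
    MC2 lam e alpha_max C2 -> 0 < a < alpha_max ->
    (forall alpha, 0 < alpha < alpha_max -> psi_SLR lam xd e a <= psi_SLR lam xd e alpha) ->
    err lam xd e a <= C * Rpower delta (2 * m / (2 * m + 1) * (2 * m)).
Proof.
  set (A := 2 * cG * Rpower (K1 * (L + alpha_max)) (2 * m) + 2 * K3).
  assert (HA : 0 < A) by (pose proof (Rpower_gt0 (K1 * (L + alpha_max)) (2 * m)); unfold A; nra).
  exists (sqrt A). split; [now apply sqrt_lt_R0|].
  intros delta a e Hdelta He He_norm HMC Ha Hmin.
  replace (2 * m / (2 * m + 1) * (2 * m)) with (p * m) by (unfold p; field; lra).
  rewrite <- Rpower_mult. apply sqrt_le_mul_Rpower; [lra|].
  eapply err2_minimizer_le; eassumption.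
Qed.

Lemma err_minimizer_rate_of_low_hi D : 0 <= D ->
  (forall alpha, 0 < alpha < alpha_max -> low_sum lam xd alpha <= D * hi_sum lam xd alpha) ->
  exists C, 0 < C /\
  forall delta a e, noise_level_small delta ->
    ex_series (fun i => e i ^ 2) -> sqrt (ssum (fun i => e i ^ 2)) <= delta ->
    MC2 lam e alpha_max C2 -> 0 < a < alpha_max ->
    (forall alpha, 0 < alpha < alpha_max -> psi_SLR lam xd e a <= psi_SLR lam xd e alpha) ->
    err lam xd e a <= C * Rpower delta (2 * m / (2 * m + 1)).
Proof.
  intros HD Hlow.
  set (B := cG + 16 * (D + 1) * (2 * K1 * X + 2 * K1 * K3 + K3)).
  assert (HB : 0 <= B).
  { assert (0 <= K1 * X) by nra. assert (0 <= K1 * K3) by nra.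
    assert (0 <= (D + 1) * (2 * K1 * X + 2 * K1 * K3 + K3)) by nra. unfold B. lra. }
  exists (sqrt (2 * B + 2 * K3)). split; [apply sqrt_lt_R0; lra|].
  intros delta a e Hdelta He He_norm HMC Ha Hmin.
  replace (2 * m / (2 * m + 1)) with (p * / 2) by (unfold p; field; lra).
  rewrite <- Rpower_mult. apply sqrt_le_mul_Rpower; [lra|].
  replace (2 * / 2) with 1 by field. rewrite Rpower_1 by apply Rpower_gt0.
  eapply Rle_trans; [apply err2_le; auto; lra|].
  assert (approx_err2 lam xd a <= B * Rpower delta p)
    by (eapply approx_err2_minimizer_le_of_low_hi; eassumption).
  assert (noise_err2 lam e a <= K3 * Rpower delta p)
    by (eapply noise_err2_minimizer_le; eassumption).
  lra.
Qed.
End Rate.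

Theorem mainTheorem9
  (lam : nat -> R) (alpha_max C2 mu Cs : R) (om xd : nat -> R)
  (Hlam : forall i, 0 <= lam i) (Hcomp : Un_cv lam 0)
  (Hamax : 0 < alpha_max)
  (Hmu : 0 < mu <= 1)
  (Hom : ex_series (fun i => om i ^ 2))
  (HomCs : sqrt (ssum (fun i => om i ^ 2)) <= Cs)
  (Hsrc : forall i, xd i = pw (lam i) mu * om i)
  (Hnz : exists i, xd i <> 0) :
  let mut := Rmin mu (1/2) in
  exists C delta0, 0 < C /\ 0 < delta0 /\
    (forall delta (e : nat -> R) (astar : R),
       0 < delta <= delta0 ->
       ex_series (fun i => e i ^ 2) ->
       sqrt (ssum (fun i => e i ^ 2)) <= delta ->
       MC2 lam e alpha_max C2 ->
       0 < astar < alpha_max ->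
       (forall alpha, 0 < alpha < alpha_max ->
          psi_SLR lam xd e astar <= psi_SLR lam xd e alpha) ->
       err lam xd e astar
         <= C * Rpower delta (2 * mut / (2 * mut + 1) * (2 * mut))) /\
    ((exists D, 0 < D /\
        forall alpha, 0 < alpha < alpha_max ->
          ssum (fun i => indic (leRb (lam i) alpha) (xd i ^ 2))
          <= D * ssum (fun i => indic (leRb alpha (lam i)) (alpha / lam i * xd i ^ 2))) ->
     forall delta (e : nat -> R) (astar : R),
       0 < delta <= delta0 ->
       ex_series (fun i => e i ^ 2) ->
       sqrt (ssum (fun i => e i ^ 2)) <= delta ->
       MC2 lam e alpha_max C2 ->
       0 < astar < alpha_max ->
       (forall alpha, 0 < alpha < alpha_max ->
          psi_SLR lam xd e astar <= psi_SLR lam xd e alpha) ->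
       err lam xd e astar <= C * Rpower delta (2 * mut / (2 * mut + 1))).
Proof.
  intros mut.
  assert (Hmut : 0 < mut <= 1/2) by (split; [apply Rmin_glb_lt | apply Rmin_r]; lra).
  assert (Hmut_mu : mut <= mu) by apply Rmin_l.
  clearbody mut.
  destruct (cv_upper_bound lam 0 Hcomp) as [L HL].
  assert (Hbounds : forall i, 0 <= lam i <= L) by auto.
  destruct Hnz as [i0 Hi0].
  pose proof (source_lam_gt0 lam om xd mu i0 (Hsrc i0) Hi0) as Hlam_i0.
  pose proof (ex_series_source lam om xd L mu Hbounds ltac:(lra) Hom Hsrc) as Hxd.
  set (cG := Rpower L (2 * (mu - mut)) * ssum (fun i => om i ^ 2)).
  assert (HcG : 0 <= cG).
  { apply Rmult_le_pos; [left; apply Rpower_gt0 | apply ssum_ge0; auto using pow2_ge_0]. }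
  pose proof (approx_err2_source_le lam om xd L mu mut Hbounds ltac:(lra) Hmut_mu Hom Hsrc) as Hap.
  pose proof (psi_SL2_exact_source_le lam om xd L mu mut Hbounds ltac:(lra) Hmut_mu Hom Hsrc) as Hex.
  destruct (noise_level_small_eventually lam xd alpha_max C2 mut cG i0 Hamax Hmut HcG Hlam_i0 Hi0)
    as (delta0 & Hdelta0 & Hsmall).
  destruct (err_minimizer_rate lam xd L alpha_max C2 mut cG i0 Hlam HL Hmut Hxd HcG Hap Hex
              Hlam_i0 Hi0) as (C1 & HC1 & Hrate1).
  destruct (classic (exists D, 0 < D /\ forall alpha, 0 < alpha < alpha_max ->
                       low_sum lam xd alpha <= D * hi_sum lam xd alpha)) as [(D & HD & Hlow)|HnoD].
  - destruct (err_minimizer_rate_of_low_hi lam xd alpha_max C2 mut cG i0 Hlam Hmut Hxd HcG Hap Hex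
                Hlam_i0 Hi0 D (Rlt_le _ _ HD) Hlow) as (C3 & HC3 & Hrate2).
    exists (C1 + C3), delta0. repeat split; [lra | lra | |].
    + intros delta e a Hd; intros. eapply Rle_trans; [apply (Hrate1 delta a e (Hsmall delta Hd)); assumption|].
      apply Rmult_le_compat_r; [left; apply Rpower_gt0 | lra].
    + intros _ delta e a Hd; intros. eapply Rle_trans; [apply (Hrate2 delta a e (Hsmall delta Hd)); assumption|].
      apply Rmult_le_compat_r; [left; apply Rpower_gt0 | lra].
  - exists C1, delta0. repeat split; [lra | lra | |].
    + intros delta e a Hd. apply (Hrate1 delta a e (Hsmall delta Hd)).
    + intros HD. exfalso. exact (HnoD HD).
Qed.
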